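(* Let $N_1$ and $N_2$ be tree-child phylogenetic networks labeled in the same finite set $S$, each satisfying that no two parents of a hybrid node are connected by a path. Then $N_1\cong N_2$ if and only if $C(N_1)=C(N_2)$.
   Context: A DAG is labeled in $S$ if its leaves (out-degree 0) are bijectively labeled by $S$; isomorphism $\cong$ means isomorphism of directed graphs preserving leaf labels. A tree node has in-degree at most 1; a hybrid node has in-degree greater than 1; a tree child is a child that is a tree node. A tree-child phylogenetic network is a rooted DAG labeled in $S$ in which every non-leaf node has at least one tree child, no tree node has out-degree 1, and every hybrid node has out-degree exactly 1. ''No two parents of a hybrid node are connected by a path'' means: if $u_1,u_2$ are parents of a hybrid node, there is no path $u_1\rightsquigarrow u_2$ nor $u_2\rightsquigarrow u_1$. For a node $v$, $C(v)$ is the set of leaves that are descendants of $v$, and $C(N)=\{C(v)\mid v\text{ a node of }N\}$. *)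

From mathcomp Require Import all_boot.
Set Implicit Arguments. Unset Strict Implicit. Unset Printing Implicit Defensive.

Record network (S : finType) := Network {
  node : finType;
  edge : rel node;
  lbl  : S -> node }.

Section Defs.
Variable S : finType.
Implicit Type N : network S.

Definition indeg N (v : node N) := #|[pred u | @edge S N u v]|.
Definition outdeg N (v : node N) := #|[pred w | @edge S N v w]|.
Definition is_leaf N (v : node N) := outdeg v == 0.
Definition tree_node N (v : node N) := indeg v <= 1.
Definition hybrid_node N (v : node N) := 1 < indeg v.

Definition acyclic N := forall u v : node N, @edge S N u v -> ~~ connect (@edge S N) v u.

Definition rooted N := exists r : node N, forall v, connect (@edge S N) r v.

Definition labeled_in N :=
  injective (@lbl S N) /\ forall v : node N, is_leaf v <-> exists s, @lbl S N s = v.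

Definition tree_child_network N :=
  [/\ acyclic N, rooted N & labeled_in N] /\ [/\
      (forall v : node N, ~~ is_leaf v -> exists2 w, @edge S N v w & tree_node w),
      (forall v : node N, tree_node v -> outdeg v != 1) &
      (forall v : node N, hybrid_node v -> outdeg v = 1)].

Definition no_parent_paths N :=
  forall h u1 u2 : node N, hybrid_node h -> @edge S N u1 h -> @edge S N u2 h ->
    u1 != u2 -> ~~ connect (@edge S N) u1 u2.

Definition net_iso (N1 N2 : network S) :=
  exists f : node N1 -> node N2,
    [/\ bijective f,
        (forall x y, @edge S N2 (f x) (f y) = @edge S N1 x y) &
        (forall s, f (@lbl S N1 s) = @lbl S N2 s)].

Definition cluster N (v : node N) : {set S} := [set s | connect (@edge S N) v (@lbl S N s)].
Definition clusters N : {set {set S}} := [set cluster v | v : node N].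
End Defs.

From mathcomp Require Import all_boot.
Set Implicit Arguments. Unset Strict Implicit. Unset Printing Implicit Defensive.

(* In a tree-child network every node reaches a leaf along tree edges, so nodes
   with comparable clusters are comparable.  When no two parents of a hybrid node
   are joined by a path, distinct children of a node are incomparable, and this
   makes tree nodes with equal clusters equal.  A hybrid node has the cluster of
   its unique (tree) child, so C(N) is the set of clusters of tree nodes, and the
   edges can be read off C(N): a -> b between tree nodes iff C(a) is the least
   cluster strictly above C(b); a tree node b has a hybrid parent iff there is no
   such least cluster; and a -> h -> b iff C(a) is a minimal cluster strictly
   above C(b).  Matching tree nodes by cluster, and each hybrid node with the
   hybrid parent of the match of its child, is thus an isomorphism. *)

Lemma homo_connect (T T' : finType) (e : rel T) (e' : rel T') (f : T -> T') :
  {homo f : x y / e x y >-> e' x y} -> {homo f : x y / connect e x y >-> connect e' x y}.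
Proof.
move=> fe x y /connectP [p xp ->]; apply/connectP.
by exists (map f p); [apply: homo_path xp | rewrite last_map].
Qed.

Section AcyclicGraph.
Variables (T : finType) (e : rel T).

Lemma connect_last_edge x y :
  connect e x y -> x != y -> exists2 z, connect e x z & e z y.
Proof.
move=> /connectP [p]; elim/last_ind: p => [|p z _] /=; first by move=> _ -> /eqP.
rewrite rcons_path last_rcons => /andP [xp ez] -> _.
by exists (last x p) => //; apply/connectP; exists p.
Qed.

Lemma connect_first_edge x y :
  connect e x y -> x != y -> exists2 z, e x z & connect e z y.
Proof.
move=> /connectP [[|z p]] /=; first by move=> _ -> /eqP.
by move=> /andP [xz zp] -> _; exists z => //; apply/connectP; exists p.
Qed.

Hypothesis acyc : forall u v, e u v -> ~~ connect e v u.

Lemma edge_connect_neq u v w : e u v -> connect e v w -> u != w.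
Proof. by move=> uv vw; apply/eqP => uw; move: (acyc uv); rewrite uw vw. Qed.

Lemma acyclic_edge_neq u v : e u v -> u != v.
Proof. by move=> uv; apply: edge_connect_neq uv (connect0 e v). Qed.

Lemma acyclic_connect_anti u v : connect e u v -> connect e v u -> u = v.
Proof.
move=> uv vu; apply/eqP; apply: contraLR vu => /(connect_first_edge uv) [w uw wv].
by apply: contra (acyc uw) => /(connect_trans wv).
Qed.

Lemma acyclic_ind (P : T -> Prop) :
  (forall v, (forall w, e v w -> P w) -> P v) -> forall v, P v.
Proof.
move=> IH; suff Pn n v : #|connect e v| = n -> P v by move=> v; apply: Pn erefl.
elim/ltn_ind: n v => n IHn v Ev; apply: IH => w vw; apply: IHn erefl; rewrite -Ev.
apply/proper_card/properP; split.
  by apply/subsetP => x /(connect_trans (connect1 vw)).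
by exists v; [apply: connect0 | apply: acyc].
Qed.

Lemma acyclic_ind_rev (P : T -> Prop) :
  (forall v, (forall u, e u v -> P u) -> P v) -> forall v, P v.
Proof.
move=> IH; suff Pn n v : #|[pred x | connect e x v]| = n -> P v.
  by move=> v; apply: Pn erefl.
elim/ltn_ind: n v => n IHn v Ev; apply: IH => u uv; apply: IHn erefl; rewrite -Ev.
apply/proper_card/properP; split.
  by apply/subsetP => x; rewrite !inE => /connect_trans; apply; apply: connect1.
by exists v; rewrite !inE ?connect0 //; apply: acyc.
Qed.

End AcyclicGraph.

Section ClusterSystem.
Variables (S : finType) (Cl : {set {set S}}).

Definition least_above (A B : {set S}) :=
  B \proper A /\ forall X, X \in Cl -> B \proper X -> A \subset X.

Definition minimal_above (A B : {set S}) :=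
  B \proper A /\ forall X, X \in Cl -> B \proper X -> X \subset A -> X = A.

Definition no_least_above (B : {set S}) :=
  (exists2 X, X \in Cl & B \proper X) /\ ~ exists2 A, A \in Cl & least_above A B.

End ClusterSystem.

Definition hybrid_child (S : finType) (N : network S) (h : node N) : node N :=
  odflt h [pick w | @edge S N h w].

Section TreeChildNetwork.
Variables (S : finType) (N : network S).
Hypothesis tcN : tree_child_network N.
Local Notation e := (@edge S N).
Local Notation conn := (connect (@edge S N)).
Local Notation C := (@cluster S N).
Implicit Types a b c h p q u v w x y z : node N.

Lemma tc_acyclic : acyclic N. Proof. by case: tcN => [[? ? ?] _]. Qed.
Lemma tc_labeled : labeled_in N. Proof. by case: tcN => [[? ? ?] _]. Qed.

Lemma tc_tree_child v : ~~ is_leaf v -> exists2 w, e v w & tree_node w.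
Proof. by case: tcN => _ [+ _ _]; apply. Qed.

Lemma tc_tree_outdeg v : tree_node v -> outdeg v != 1.
Proof. by case: tcN => _ [_ + _]; apply. Qed.

Lemma tc_hybrid_outdeg v : hybrid_node v -> outdeg v = 1.
Proof. by case: tcN => _ [_ _ +]; apply. Qed.

Lemma tree_nodeN v : tree_node v = ~~ hybrid_node v.
Proof. by rewrite /tree_node /hybrid_node -leqNgt. Qed.

Lemma tree_parent_uniq v p q : tree_node v -> e p v -> e q v -> p = q.
Proof. by move=> /card_le1_eqP tv pv qv; apply: tv; rewrite inE. Qed.

Lemma hybrid_child_uniq h c c' : hybrid_node h -> e h c -> e h c' -> c = c'.
Proof.
move=> /tc_hybrid_outdeg hh; have /card_le1_eqP h1 : outdeg h <= 1 by rewrite hh.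
by move=> hc hc'; apply: h1; rewrite inE.
Qed.

Lemma tree_hybrid_neq x y : tree_node x -> hybrid_node y -> x != y.
Proof. by move=> tx; apply: contraTneq => <-; rewrite -tree_nodeN. Qed.

Lemma hybrid_not_leaf h : hybrid_node h -> ~~ is_leaf h.
Proof. by move=> /tc_hybrid_outdeg; rewrite /is_leaf => ->. Qed.

Lemma hybrid_child_tree h c : hybrid_node h -> e h c -> tree_node c.
Proof.
move=> hh hc; have [w hw tw] := tc_tree_child (hybrid_not_leaf hh).
by rewrite (hybrid_child_uniq hh hc hw).
Qed.

Lemma hybrid_parents h : hybrid_node h -> exists q1 q2, [/\ e q1 h, e q2 h & q1 != q2].
Proof. by move=> /card_gt1P [x [y [xh yh xy]]]; exists x, y; rewrite !inE in xh yh. Qed.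

Lemma hybrid_parent_tree q h : hybrid_node h -> e q h -> tree_node q.
Proof.
move=> hh qh; rewrite tree_nodeN; apply: contraL hh => /hybrid_child_tree /(_ qh).
by rewrite tree_nodeN.
Qed.

Lemma leaf_edgeF v w : is_leaf v -> e v w = false.
Proof. by move=> /eqP /card0_eq /(_ w); rewrite inE. Qed.

Lemma leaf_tree v : is_leaf v -> tree_node v.
Proof. by rewrite tree_nodeN; apply: contraL => /hybrid_not_leaf. Qed.

Lemma lbl_leaf s : is_leaf (@lbl S N s).
Proof. by apply/(proj2 tc_labeled); exists s. Qed.

Lemma leaf_connect_eq v w : is_leaf v -> conn v w -> w = v.
Proof.
move=> lv vw; apply/eqP; rewrite eq_sym; apply/negPn/negP.
by move=> /(connect_first_edge vw) [z]; rewrite leaf_edgeF.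
Qed.

Lemma cluster_lbl s : C (@lbl S N s) = [set s].
Proof.
apply/setP => s'; rewrite !inE; apply/idP/eqP => [|->]; last exact: connect0.
by move=> /(leaf_connect_eq (lbl_leaf s)) /(proj1 tc_labeled).
Qed.

Lemma connect_cluster_sub u v : conn u v -> C v \subset C u.
Proof. by move=> uv; apply/subsetP => s; rewrite !inE; apply: connect_trans. Qed.

Definition tree_edge : rel (node N) := fun x y => e x y && tree_node y.

Lemma connect_tree_edge x y : connect tree_edge x y -> conn x y.
Proof. by apply: connect_sub => a b /andP [ab _]; apply: connect1. Qed.

(* [s] is reached from [v] by following tree children; as tree nodes have a single
   parent, an ancestor of [s] is either above [v] or on that tree path. *)
Lemma tree_path_leaf v : exists s, conn v (@lbl S N s) /\
  forall u, conn u (@lbl S N s) -> conn u v \/ connect tree_edge v u.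
Proof.
elim/(acyclic_ind tc_acyclic): v => v IH.
have [lv | /tc_tree_child [w vw tw]] := boolP (is_leaf v).
  have [s <-] := proj1 (proj2 tc_labeled v) lv.
  by exists s; split => [|u]; [apply: connect0 | left].
have vTw : tree_edge v w by rewrite /tree_edge vw tw.
have [s [ws Hs]] := IH w vw; exists s; split; first exact: connect_trans (connect1 vw) ws.
move=> u /Hs [uw | wu]; last by right; apply: connect_trans (connect1 vTw) wu.
have [-> | nuw] := eqVneq u w; first by right; apply: connect1.
have [x ux xw] := connect_last_edge uw nuw.
by left; rewrite (tree_parent_uniq tw vw xw).
Qed.

Lemma tree_edge_chain x y u :
  connect tree_edge x u -> connect tree_edge y u -> conn x y \/ conn y x.
Proof.
elim/(acyclic_ind_rev tc_acyclic): u => u IH xu yu.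
have [-> | nxu] := eqVneq x u; first by right; apply: connect_tree_edge.
have [-> | nyu] := eqVneq y u; first by left; apply: connect_tree_edge.
have [p xp /andP [pu tu]] := connect_last_edge xu nxu.
have [q yq /andP [qu _]] := connect_last_edge yu nyu.
by apply: (IH p pu xp); rewrite (tree_parent_uniq tu pu qu).
Qed.

Lemma cluster_sub_comparable u v : C v \subset C u -> conn u v \/ conn v u.
Proof.
move=> /subsetP sub; have [s [vs Hs]] := tree_path_leaf v.
have := sub s; rewrite !inE => /(_ vs) /Hs [] //; first by left.
by move=> /connect_tree_edge; right.
Qed.

Lemma tree_other_child b x : tree_node b -> e b x -> exists2 w, e b w & w != x.
Proof.
move=> tb bx; have nlb : ~~ is_leaf b by apply: contraTN bx => /leaf_edgeF ->.
have : 1 < outdeg b.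
  by move: nlb (tc_tree_outdeg tb); rewrite /is_leaf; case: (outdeg b) => [|[|]].
move=> /card_gt1P [y [z [yb zb yz]]]; rewrite !inE in yb zb.
by have [Eyx | ?] := eqVneq y x; [exists z; rewrite // -Eyx eq_sym | exists y].
Qed.

Lemma hybrid_cluster_child h c : hybrid_node h -> e h c -> C h = C c.
Proof.
move=> hh hc; apply/eqP; rewrite eqEsubset (connect_cluster_sub (connect1 hc)) andbT.
apply/subsetP => s; rewrite !inE => hs.
have nhs : h != @lbl S N s.
  by apply: contraL hh => /eqP ->; rewrite -tree_nodeN leaf_tree ?lbl_leaf.
by have [z hz zs] := connect_first_edge hs nhs; rewrite (hybrid_child_uniq hh hc hz).
Qed.

Lemma mem_clusters v : C v \in clusters N.
Proof. exact: imset_f. Qed.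

Lemma hybrid_child_edge h : hybrid_node h -> e h (hybrid_child h).
Proof.
move=> hh; rewrite /hybrid_child; case: pickP => [// | noedge].
have : 0 < outdeg h by rewrite tc_hybrid_outdeg.
by move=> /card_gt0P [w]; rewrite inE noedge.
Qed.

Lemma clustersP X : X \in clusters N <-> exists2 t, tree_node t & X = C t.
Proof.
split => [/imsetP [v _ ->] | [t _ ->]]; last exact: mem_clusters.
have [tv | hv] := boolP (tree_node v); first by exists v.
rewrite tree_nodeN negbK in hv; have [c hc tc] := tc_tree_child (hybrid_not_leaf hv).
by exists c => //; apply: hybrid_cluster_child.
Qed.

Hypothesis nppN : no_parent_paths N.

Lemma hybrid_parents_connect_eq h q1 q2 :
  hybrid_node h -> e q1 h -> e q2 h -> conn q1 q2 -> q1 = q2.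
Proof. by move=> hh q1h q2h; apply: contraTeq; apply: (nppN hh). Qed.

(* A path [x ~> w] ends with an edge [y -> w]: [y = b] closes a cycle through [b],
   and [y != b] makes [w] a hybrid node whose parents [b] and [y] are joined by a path. *)
Lemma children_incomparable b x w : e b x -> e b w -> x != w -> ~~ conn x w.
Proof.
move=> bx bw nxw; apply/negP => xw.
have [y xy yw] := connect_last_edge xw nxw.
have [Eby | nby] := eqVneq b y; first by move: (tc_acyclic bx); rewrite Eby xy.
have : ~~ tree_node w by apply: contra nby => tw; rewrite (tree_parent_uniq tw bw yw).
rewrite tree_nodeN negbK => hw.
by move: (nppN hw bw yw nby); rewrite (connect_trans (connect1 bx) xy).
Qed.

(* If [b ~> a] properly, the tree path from [b] to a leaf passes through [a], so
   [a] lies below a child [x] of [b]; the leaf below a second child [w] of [b]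
   then forces [x] and [w] to be comparable. *)
Lemma tree_cluster_inj a b : tree_node a -> tree_node b -> C a = C b -> a = b.
Proof.
wlog ba : a b / conn b a.
  move=> W ta tb Eab; have : C b \subset C a by rewrite Eab.
  by move=> /cluster_sub_comparable [ab | ba]; [apply/esym/W | apply: W].
move=> ta tb Eab; apply/eqP/negPn/negP => nab.
have [s [bs Hs]] := tree_path_leaf b.
have : s \in C a by rewrite Eab inE.
rewrite inE => /Hs [ab | bTa].
  by rewrite (acyclic_connect_anti tc_acyclic ab ba) eqxx in nab.
have nba : b != a by rewrite eq_sym.
have [x /andP [bx _] xTa] := connect_first_edge bTa nba.
have [w bw nwx] := tree_other_child tb bx.
have nxw : x != w by rewrite eq_sym.
have [s' [ws' Hs']] := tree_path_leaf w.
have : s' \in C a by rewrite Eab inE; apply: connect_trans (connect1 bw) ws'.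
rewrite inE => /Hs' [aw | wTa].
  move: (children_incomparable bx bw nxw).
  by rewrite (connect_trans (connect_tree_edge xTa) aw).
have [xw | wx] := tree_edge_chain xTa wTa.
  by move: (children_incomparable bx bw nxw); rewrite xw.
by move: (children_incomparable bw bx nwx); rewrite wx.
Qed.

Lemma tree_cluster_sub a b : tree_node a -> tree_node b -> C b \subset C a -> conn a b.
Proof.
move=> ta tb sub; have [// | ba] := cluster_sub_comparable sub.
have Eab : C a = C b by apply/eqP; rewrite eqEsubset sub connect_cluster_sub.
by rewrite (tree_cluster_inj ta tb Eab) connect0.
Qed.

Lemma tree_cluster_proper a b : tree_node a -> tree_node b ->
  C b \proper C a <-> conn a b /\ a != b.
Proof.
move=> ta tb; split.
  move=> /properP [sub [s sa sb]]; split; first exact: tree_cluster_sub.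
  by apply: contraNneq sb => Eab; rewrite -Eab.
move=> [ab nab]; rewrite properEneq connect_cluster_sub // andbT.
by apply: contraNneq nab => /esym /(tree_cluster_inj ta tb) ->.
Qed.

Lemma hybrid_parent_cluster_proper q h b :
  hybrid_node h -> e q h -> e h b -> C b \proper C q.
Proof.
move=> hh qh hb; apply/tree_cluster_proper.
- exact: hybrid_parent_tree hh qh.
- exact: hybrid_child_tree hh hb.
split; first exact: connect_trans (connect1 qh) (connect1 hb).
exact: (edge_connect_neq tc_acyclic qh (connect1 hb)).
Qed.

Lemma tree_edgeE a b : tree_node a -> tree_node b ->
  e a b <-> least_above (clusters N) (C a) (C b).
Proof.
move=> ta tb; split=> [ab | [/(tree_cluster_proper ta tb) [ab nab] least]].
  split.
    by apply/tree_cluster_proper; rewrite // connect1 ?(acyclic_edge_neq tc_acyclic ab).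
  move=> X /clustersP [z tz ->] /(tree_cluster_proper tz tb) [zb nzb].
  have [y zy yb] := connect_last_edge zb nzb.
  by apply: connect_cluster_sub; rewrite (tree_parent_uniq tb ab yb).
have above_a q : tree_node q -> C b \proper C q -> conn q a.
  by move=> tq bq; apply: tree_cluster_sub => //; apply: least => //; apply: mem_clusters.
have [p ap pb] := connect_last_edge ab nab.
have [tp | hp] := boolP (tree_node p).
  suff pa : conn p a by rewrite (acyclic_connect_anti tc_acyclic ap pa).
  apply: above_a => //; apply/tree_cluster_proper => //.
  by rewrite connect1 ?(acyclic_edge_neq tc_acyclic pb).
rewrite tree_nodeN negbK in hp.
have [q1 [q2 [q1p q2p nq12]]] := hybrid_parents hp.
have [q aq qp] := connect_last_edge ap (tree_hybrid_neq ta hp).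
have to_q q' : e q' p -> q' = q.
  move=> q'p; apply: (hybrid_parents_connect_eq hp q'p qp); apply: connect_trans aq.
  by apply: above_a (hybrid_parent_tree hp q'p) (hybrid_parent_cluster_proper hp q'p pb).
by move: nq12; rewrite (to_q _ q1p) (to_q _ q2p) eqxx.
Qed.

Lemma hybrid_edgeE a h b : tree_node a -> hybrid_node h -> e h b ->
  e a h <-> minimal_above (clusters N) (C a) (C b).
Proof.
move=> ta hh hb; have tb := hybrid_child_tree hh hb.
split=> [ah | [/(tree_cluster_proper ta tb) [ab nab] minimal]].
  split=> [|X /clustersP [z tz ->] /(tree_cluster_proper tz tb) [zb nzb] za].
    exact: hybrid_parent_cluster_proper hh ah hb.
  have [y zy yb] := connect_last_edge zb nzb.
  rewrite -(tree_parent_uniq tb hb yb) in zy.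
  have [q zq qh] := connect_last_edge zy (tree_hybrid_neq tz hh).
  have az := tree_cluster_sub ta tz za.
  have Eaq := hybrid_parents_connect_eq hh ah qh (connect_trans az zq).
  rewrite -Eaq in zq.
  by rewrite (acyclic_connect_anti tc_acyclic az zq).
have [y ay yb] := connect_last_edge ab nab.
rewrite (tree_parent_uniq tb yb hb) in ay.
have [q aq qh] := connect_last_edge ay (tree_hybrid_neq ta hh).
have := minimal (C q) (mem_clusters q) (hybrid_parent_cluster_proper hh qh hb).
move=> /(_ (connect_cluster_sub aq)) /(tree_cluster_inj (hybrid_parent_tree hh qh) ta).
by move=> <-.
Qed.

Lemma hybrid_parentE b : tree_node b ->
  (exists2 h, hybrid_node h & e h b) <-> no_least_above (clusters N) (C b).
Proof.
move=> tb; split=> [[h hh hb] | [[X /clustersP [z tz ->]]]].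
  have [q [_ [qh _ _]]] := hybrid_parents hh.
  split.
    by exists (C q); rewrite ?mem_clusters ?(hybrid_parent_cluster_proper hh qh hb).
  case=> _ /clustersP [a ta ->] /(tree_edgeE ta tb) ab.
  by move: ta; rewrite (tree_parent_uniq tb ab hb) tree_nodeN hh.
move=> /(tree_cluster_proper tz tb) [zb nzb] no_least.
have [p _ pb] := connect_last_edge zb nzb.
have [tp | hp] := boolP (tree_node p); last by exists p; rewrite // tree_nodeN negbK in hp.
by case: no_least; exists (C p); rewrite ?mem_clusters //; apply/tree_edgeE.
Qed.

End TreeChildNetwork.

Section ClusterMatch.
Variables (S : finType) (N1 N2 : network S) (d : node N2).

(* [d] is a junk value; when the cluster sets agree a match always exists. *)
Definition tree_match (v : node N1) : node N2 :=
  odflt d [pick w | tree_node w && (cluster w == cluster v)].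

Definition net_map (v : node N1) : node N2 :=
  if tree_node v then tree_match v
  else odflt d [pick p | @edge S N2 p (tree_match (hybrid_child v)) && hybrid_node p].

Hypotheses (tc1 : tree_child_network N1) (tc2 : tree_child_network N2).
Hypotheses (npp1 : no_parent_paths N1) (npp2 : no_parent_paths N2).
Hypothesis eqCl : clusters N1 = clusters N2.

Lemma tree_match_spec t : tree_node t ->
  tree_node (tree_match t) /\ cluster (tree_match t) = cluster t.
Proof.
move=> tt; rewrite /tree_match; case: pickP => [w /andP [tw /eqP] // | nomatch].
have /(clustersP tc2) [w tw Ew] : cluster t \in clusters N2 by rewrite -eqCl mem_clusters.
by move: (nomatch w); rewrite tw -Ew eqxx.
Qed.

Lemma net_map_tree t : tree_node t -> net_map t = tree_match t.
Proof. by rewrite /net_map => ->. Qed.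

Lemma net_map_hybrid h : hybrid_node h ->
  hybrid_node (net_map h) /\ @edge S N2 (net_map h) (tree_match (hybrid_child h)).
Proof.
move=> hh; rewrite /net_map tree_nodeN hh /=.
have hb := hybrid_child_edge tc1 hh; have tb := hybrid_child_tree tc1 hh hb.
have [tb' Cb'] := tree_match_spec tb.
have : no_least_above (clusters N2) (cluster (tree_match (hybrid_child h))).
  by rewrite Cb' -eqCl; apply/(hybrid_parentE tc1 npp1 tb); exists h.
move=> /(hybrid_parentE tc2 npp2 tb') [p hp pb].
case: pickP => [q /andP [qb hq] // | noparent].
by move: (noparent p); rewrite pb hp.
Qed.

Lemma net_map_edge x y : @edge S N1 x y -> @edge S N2 (net_map x) (net_map y).
Proof.
move=> xy; have [tx | hx] := boolP (tree_node x); last first.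
  rewrite tree_nodeN negbK in hx; have [_ xb'] := net_map_hybrid hx.
  have ty := hybrid_child_tree tc1 hx xy.
  by rewrite (net_map_tree ty) -(hybrid_child_uniq tc1 hx (hybrid_child_edge tc1 hx) xy).
have [tx' Cx'] := tree_match_spec tx; rewrite (net_map_tree tx).
have [ty | hy] := boolP (tree_node y).
  have [ty' Cy'] := tree_match_spec ty; rewrite (net_map_tree ty).
  apply/(tree_edgeE tc2 npp2 tx' ty'); rewrite Cx' Cy' -eqCl.
  exact/(tree_edgeE tc1 npp1 tx ty).
rewrite tree_nodeN negbK in hy; have [hy' yb'] := net_map_hybrid hy.
have yb := hybrid_child_edge tc1 hy; have tb := hybrid_child_tree tc1 hy yb.
have [tb' Cb'] := tree_match_spec tb.
apply/(hybrid_edgeE tc2 npp2 tx' hy' yb'); rewrite Cx' Cb' -eqCl.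
exact/(hybrid_edgeE tc1 npp1 tx hy yb).
Qed.

End ClusterMatch.

Section ClusterMatchInverse.
Variables (S : finType) (N1 N2 : network S).
Hypotheses (tc1 : tree_child_network N1) (tc2 : tree_child_network N2).
Hypotheses (npp1 : no_parent_paths N1) (npp2 : no_parent_paths N2).
Hypothesis eqCl : clusters N1 = clusters N2.
Variables (d1 : node N1) (d2 : node N2).

Lemma tree_matchK t : tree_node t -> tree_match d1 (tree_match d2 t) = t.
Proof.
move=> tt; have [tt' Ct'] := tree_match_spec d2 tc2 eqCl tt.
have [tt'' Ct''] := tree_match_spec d1 tc1 (esym eqCl) tt'.
by apply: (tree_cluster_inj tc1 npp1 tt'' tt); rewrite Ct'' Ct'.
Qed.

Lemma net_mapK : cancel (net_map d2) (net_map d1).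
Proof.
move=> v; have [tv | hv] := boolP (tree_node v).
  have [tv' _] := tree_match_spec d2 tc2 eqCl tv.
  by rewrite (net_map_tree d2 tv) (net_map_tree d1 tv') tree_matchK.
rewrite tree_nodeN negbK in hv.
have [hv' vb'] := net_map_hybrid d2 tc1 tc2 npp1 npp2 eqCl hv.
have vb := hybrid_child_edge tc1 hv; have tb := hybrid_child_tree tc1 hv vb.
rewrite {1}/net_map tree_nodeN hv' /=.
rewrite (hybrid_child_uniq tc2 hv' (hybrid_child_edge tc2 hv') vb').
rewrite tree_matchK //; case: pickP => [q /andP [qb _] | noparent].
  exact: tree_parent_uniq tb qb vb.
by move: (noparent v); rewrite vb hv.
Qed.

End ClusterMatchInverse.

Lemma net_iso_clusters (S : finType) (N1 N2 : network S) :
  net_iso N1 N2 -> clusters N1 = clusters N2.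
Proof.
move=> [f [[g fK gK] Ef Lf]].
have f_connect x y : connect (@edge S N2) (f x) (f y) = connect (@edge S N1) x y.
  apply/idP/idP; last by apply: homo_connect => a b; rewrite Ef.
  by rewrite -{2}(fK x) -{2}(fK y); apply: homo_connect => a b; rewrite -Ef !gK.
have Cf v : cluster (f v) = cluster v by apply/setP => s; rewrite !inE -Lf f_connect.
apply/setP => X; apply/imsetP/imsetP => [[v _ ->] | [w _ ->]].
  by exists (f v); rewrite ?Cf.
by exists (g w); rewrite // -{1}(gK w) Cf.
Qed.

Lemma clusters_net_iso (S : finType) (N1 N2 : network S) :
  tree_child_network N1 -> tree_child_network N2 ->
  no_parent_paths N1 -> no_parent_paths N2 ->
  clusters N1 = clusters N2 -> net_iso N1 N2.
Proof.
move=> tc1 tc2 npp1 npp2 eqCl.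
have [[_ [r1 _] _] _] := tc1; have [[_ [r2 _] _] _] := tc2.
have K12 := net_mapK tc1 tc2 npp1 npp2 eqCl r1 r2.
have K21 := net_mapK tc2 tc1 npp2 npp1 (esym eqCl) r2 r1.
exists (net_map r2); split; first by exists (net_map r1).
  move=> x y; apply/idP/idP; last exact: net_map_edge.
  by move=> /(net_map_edge r1 tc2 tc1 npp2 npp1 (esym eqCl)); rewrite !K12.
move=> s; have ts := leaf_tree tc1 (lbl_leaf tc1 s).
have [ts' Cs'] := tree_match_spec r2 tc2 eqCl ts; rewrite (net_map_tree r2 ts).
apply: (tree_cluster_inj tc2 npp2 ts' (leaf_tree tc2 (lbl_leaf tc2 s))).
by rewrite Cs' !cluster_lbl.
Qed.

Theorem theorem8 (S : finType) (N1 N2 : network S) :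
  tree_child_network N1 -> tree_child_network N2 ->
  no_parent_paths N1 -> no_parent_paths N2 ->
  net_iso N1 N2 <-> clusters N1 = clusters N2.
Proof.
move=> tc1 tc2 npp1 npp2; split; first exact: net_iso_clusters.
exact: clusters_net_iso.
Qed.
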